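(* Let $n\geq 3$ and $c\geq 1$, and let $\upsilon: UV_n(c)\to \mathrm{GL}_n(\mathbb{C})$ be a nontrivial homogeneous $2$-local representation. Then, up to equivalence of representations, $\upsilon$ is given by \[ \upsilon(\rho_i)=\begin{pmatrix} I_{i-1}&0&0\\ 0&\begin{pmatrix}0&r_2\\ \frac{1}{r_2}&0\end{pmatrix}&0\\ 0&0&I_{n-i-1}\end{pmatrix},\qquad \upsilon(\sigma_{i,t})=\begin{pmatrix} I_{i-1}&0&0\\ 0&\begin{pmatrix}s_{1,t}&s_{2,t}\\ s_{3,t}&s_{4,t}\end{pmatrix}&0\\ 0&0&I_{n-i-1}\end{pmatrix} \] for all $1\le i\le n-1$ and $1\le t\le c$, where $r_2,s_{1,t},s_{2,t},s_{3,t},s_{4,t}\in\mathbb{C}$ satisfy $r_2\neq 0$ and $s_{1,t}s_{4,t}-s_{2,t}s_{3,t}\neq 0$.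
   Context: For $n\ge 2$, $c\ge 1$, the universal virtual braid group $UV_n(c)$ is the group with generators $\rho_i$ ($1\le i\le n-1$) and $\sigma_{i,t}$ ($1\le i\le n-1$, $1\le t\le c$) and relations: $\rho_i\rho_{i+1}\rho_i=\rho_{i+1}\rho_i\rho_{i+1}$ ($1\le i\le n-2$); $\rho_i\rho_j=\rho_j\rho_i$ ($|i-j|\ge 2$); $\rho_i^2=1$; $\sigma_{i,t}\sigma_{j,\ell}=\sigma_{j,\ell}\sigma_{i,t}$ ($|i-j|\ge2$, $1\le t,\ell\le c$); $\sigma_{i,t}\rho_j=\rho_j\sigma_{i,t}$ ($|i-j|\ge 2$); $\rho_i\rho_{i+1}\sigma_{i,t}=\sigma_{i+1,t}\rho_i\rho_{i+1}$ ($1\le i\le n-2$, $1\le t\le c$). A representation $\theta:UV_n(c)\to\mathrm{GL}_{n}(\mathbb{C})$ is called homogeneous $2$-local if there are matrices $R, S_1,\dots,S_c\in \mathrm{GL}_2(\mathbb{C})$ such that for all $i,t$, $\theta(\rho_i)=\mathrm{diag}(I_{i-1},R,I_{n-i-1})$ and $\theta(\sigma_{i,t})=\mathrm{diag}(I_{i-1},S_t,I_{n-i-1})$ (block diagonal), where $I_r$ is the $r\times r$ identity matrix. It is nontrivial if it is not the trivial representation (all generators sent to the identity). Two representations are equivalent if they are conjugate by a fixed invertible matrix. *)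

From HB Require Import structures.
From mathcomp Require Import all_boot all_order all_algebra.
From mathcomp Require Import complex Rstruct.
Set Implicit Arguments. Unset Strict Implicit. Unset Printing Implicit Defensive.
Import Order.TTheory GRing.Theory Num.Theory.
Local Open Scope ring_scope.

Definition C : fieldType := Rdefinitions.R[i].

Definition mx2 (F : nzRingType) (a b c d : F) : 'M[F]_2 :=
  \matrix_(j < 2, k < 2)
    if (j == 0 :> nat) then (if (k == 0 :> nat) then a else b)
    else (if (k == 0 :> nat) then c else d).

(* diag(I_{i-1}, A, I_{n-i-1}) for 1 <= i <= n-1 (paper's 1-based indexing):
   the 2x2 block A occupies (0-based) rows/columns i-1 and i. *)
Definition loc2 (F : nzRingType) (n i : nat) (A : 'M[F]_2) : 'M[F]_n :=
  \matrix_(j < n, k < n)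
    if [&& (i.-1 <= j)%N, (j <= i)%N, (i.-1 <= k)%N & (k <= i)%N]
    then A (inord (j - i.-1)) (inord (k - i.-1))
    else (j == k)%:R.

Definition far (i j : nat) : bool := (i + 2 <= j)%N || (j + 2 <= i)%N.

(* The assignment rho_i |-> loc2 n i R, sigma_{i,t} |-> loc2 n i (S t)
   (1 <= i <= n-1, t : 'I_c standing for 1 <= t+1 <= c) respects all the
   defining relations of UV_n(c), i.e. defines a homogeneous 2-local
   representation UV_n(c) -> GL_n(C) with R, S_t in GL_2(C). *)
Definition homog_2local_rep (n c : nat) (R : 'M[C]_2) (S : 'I_c -> 'M[C]_2) : Prop :=
  let rho i := loc2 n i R in
  let sigma i t := loc2 n i (S t) in
  R \in unitmx /\
      (forall t, S t \in unitmx) /\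
      (forall i, (1 <= i)%N -> (i <= n - 2)%N ->
         rho i *m rho i.+1 *m rho i = rho i.+1 *m rho i *m rho i.+1) /\
      (forall i j, (1 <= i <= n - 1)%N -> (1 <= j <= n - 1)%N -> far i j ->
         rho i *m rho j = rho j *m rho i) /\
      (forall i, (1 <= i <= n - 1)%N -> rho i *m rho i = 1%:M) /\
      (forall i j t l, (1 <= i <= n - 1)%N -> (1 <= j <= n - 1)%N -> far i j ->
         sigma i t *m sigma j l = sigma j l *m sigma i t) /\
      (forall i j t, (1 <= i <= n - 1)%N -> (1 <= j <= n - 1)%N -> far i j ->
         sigma i t *m rho j = rho j *m sigma i t) /\
      (forall i t, (1 <= i)%N -> (i <= n - 2)%N ->
         rho i *m rho i.+1 *m sigma i t = sigma i.+1 t *m rho i *m rho i.+1).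

Definition nontrivial_rep (n c : nat) (R : 'M[C]_2) (S : 'I_c -> 'M[C]_2) : Prop :=
  ~ ((forall i, (1 <= i <= n - 1)%N -> loc2 n i R = 1%:M) /\
     (forall i t, (1 <= i <= n - 1)%N -> loc2 n i (S t) = 1%:M)).

Arguments homog_2local_rep : clear implicits.
Arguments nontrivial_rep : clear implicits.

From HB Require Import structures.
From mathcomp Require Import all_boot all_order all_algebra.
From mathcomp Require Import complex Rstruct zify ring.
Set Implicit Arguments. Unset Strict Implicit. Unset Printing Implicit Defensive.
Import Order.TTheory GRing.Theory Num.Theory.
Local Open Scope ring_scope.

(* Restricted to the first three coordinates, rho_1^2 = 1 and the braid relation
   become polynomial identities in the entries a, b, c, d of R: R^2 = 1 gives
   a^2 + bc = d^2 + bc = 1 and b(a + d) = c(a + d) = 0, and with these the two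
   corner entries of rho_1 rho_2 rho_1 = rho_2 rho_1 rho_2 give
   a^2(1 - a) = d^2(1 - d) = 0.  If a + d != 0 then b = c = 0 and R = 1; the mixed
   relation rho_1 rho_2 sigma_1 = sigma_2 rho_1 rho_2 then reads sigma_1 = sigma_2,
   which forces every S_t = 1, so the representation is trivial.  Otherwise d = -a
   and adding the two cubic identities gives 2a^2 = 0, whence a = d = 0 and bc = 1:
   R is already antidiagonal and no change of basis is needed. *)

Lemma det_mx2 (F : comNzRingType) (a b c d : F) : \det (mx2 a b c d) = a * d - b * c.
Proof.
rewrite (expand_det_row _ 0) !big_ord_recl big_ord0 /cofactor !det_mx11 !mxE /=.
by rewrite expr0 expr1; ring.
Qed.

Section Loc2.
Variable F : nzRingType.
Implicit Types (A : 'M[F]_2).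

Lemma mx2E A : A = mx2 (A 0 0) (A 0 1) (A 1 0) (A 1 1).
Proof.
apply/matrixP=> i j; rewrite mxE.
by case: i j => [[|[|//]] ?] [[|[|//]] ?]; congr (A _ _); apply: val_inj.
Qed.

Lemma mx2_1 : 1%:M = mx2 (1 : F) 0 0 1.
Proof. by apply/matrixP=> i j; rewrite !mxE; case: i j => [[|[|//]] ?] [[|[|//]] ?]. Qed.

Lemma mx2_inj (a b c d a' b' c' d' : F) :
  mx2 a b c d = mx2 a' b' c' d' -> [/\ a = a', b = b', c = c' & d = d'].
Proof.
move=> E; have e j k := congr1 (fun M : 'M[F]_2 => M j k) E.
by move: (e 0 0) (e 0 1) (e 1 0) (e 1 1); rewrite !mxE.
Qed.

Lemma mulmx2 (a b c d a' b' c' d' : F) :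
  mx2 a b c d *m mx2 a' b' c' d'
  = mx2 (a * a' + b * c') (a * b' + b * d') (c * a' + d * c') (c * b' + d * d').
Proof.
apply/matrixP=> i j; rewrite !mxE !big_ord_recl big_ord0 !mxE /= addr0.
by case: i j => [[|[|//]] ?] [[|[|//]] ?].
Qed.

Lemma loc2_1 n i : (0 < i)%N -> loc2 n i (1%:M : 'M[F]_2) = 1%:M.
Proof.
move=> i_gt0; apply/matrixP=> j k; rewrite !mxE.
case: ifP => // /and4P[? ? ? ?]; rewrite -val_eqE /= !inordK; [|lia..].
by congr (_%:R); rewrite -[j == k]val_eqE /=; apply/eqP/eqP; lia.
Qed.

Lemma loc2_2_1 A : loc2 2 1 A = A.
Proof.
by apply/matrixP=> j k; rewrite mxE /= !leq_ord !subn0 !inord_val.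
Qed.

Lemma loc2_block p m i A : (0 < i < p)%N ->
  loc2 (p + m) i A = block_mx (loc2 p i A) 0 0 1%:M.
Proof.
move=> /andP[i_gt0 i_lt]; apply/matrixP=> j k; rewrite !mxE -val_eqE /=.
case: (splitP j) => j' ->; rewrite mxE; case: (splitP k) => k' ->; rewrite !mxE /=.
- by [].
- case: ifP => [/and4P[? ? ? ?]|_]; first lia.
  by case: eqP => //; have := ltn_ord j'; lia.
- case: ifP => [/and4P[? ? ? ?]|_]; first lia.
  by case: eqP => //; have := ltn_ord k'; lia.
- case: ifP => [/and4P[? ? ? ?]|_]; first lia.
  by rewrite eqn_add2l.
Qed.

Lemma mul_block_diag1 p m (X Y : 'M[F]_p) :
  block_mx X 0 0 (1%:M : 'M_m) *m block_mx Y 0 0 1%:M = block_mx (X *m Y) 0 0 1%:M.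
Proof. by rewrite mulmx_block !mulmx0 !mul0mx !addr0 !add0r mulmx1. Qed.

Lemma block_diag1_inj p m (X Y : 'M[F]_p) :
  block_mx X 0 0 (1%:M : 'M_m) = block_mx Y 0 0 1%:M -> X = Y.
Proof. by case/eq_block_mx. Qed.

Lemma loc2_3_1_sqr1 (A : 'M[F]_2) : loc2 3 1 A *m loc2 3 1 A = 1%:M -> A *m A = 1%:M.
Proof.
rewrite (@loc2_block 2 1 1) // loc2_2_1 (@mul_block_diag1 2 1) (scalar_mx_block 2 1).
exact: (@block_diag1_inj 2 1).
Qed.

Lemma loc2_3_12_eq1 (A : 'M[F]_2) : loc2 3 1 A = loc2 3 2 A -> A = 1%:M.
Proof.
rewrite [A]mx2E mx2_1; move: (A 0 0) (A 0 1) (A 1 0) (A 1 1) => a b c d E.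
have e j k := congr1 (fun M : 'M[F]_3 => M j k) E.
by move: (e 0 0) (e 0 1) (e 1 0) (e 2 2); rewrite !mxE /= !inordK //= => -> -> -> <-.
Qed.

Lemma mulmx3E (X Y : 'M[F]_3) j k :
  (X *m Y) j k = X j 0 * Y 0 k + X j 1 * Y 1 k + X j 2 * Y 2 k.
Proof.
rewrite mxE !big_ord_recl big_ord0 addr0 addrA.
have -> : lift ord0 ord0 = 1 :> 'I_3 by apply: val_inj.
by have -> : lift ord0 (lift ord0 ord0) = 2 :> 'I_3 by apply: val_inj.
Qed.

Lemma loc2_3_braid_entries (a b c d : F) (A := mx2 a b c d) :
  loc2 3 1 A *m loc2 3 2 A *m loc2 3 1 A = loc2 3 2 A *m loc2 3 1 A *m loc2 3 2 A ->
  a * a + b * a * c = a /\ d = c * d * b + d * d.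
Proof.
move=> E; have e j k := congr1 (fun M : 'M[F]_3 => M j k) E.
move: (e 0 0) (e 2 2); rewrite !mulmx3E !mxE /= !inordK //=.
by rewrite !(mulr0, mul0r, mulr1, mul1r, addr0, add0r).
Qed.
End Loc2.

Section Involution.
Variable F : fieldType.
Hypothesis two_neq0 : (2%:R : F) != 0.

Lemma involutive_braid_mx2 (A : 'M[F]_2) :
  A *m A = 1%:M ->
  loc2 3 1 A *m loc2 3 2 A *m loc2 3 1 A = loc2 3 2 A *m loc2 3 1 A *m loc2 3 2 A ->
  A = 1%:M \/ exists2 r : F, r != 0 & A = mx2 0 r r^-1 0.
Proof.
rewrite [A]mx2E mx2_1; move: (A 0 0) (A 0 1) (A 1 0) (A 1 1) => a b c d.
rewrite mulmx2 => /mx2_inj[sq_a sq_b sq_c sq_d] /loc2_3_braid_entries[br_a br_d].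
have cube_a : a ^+ 2 * (1 - a) = 0.
  rewrite (_ : _ * _ = (a * a + b * a * c - a) - a * (a * a + b * c - 1)); last by ring.
  by rewrite br_a sq_a !subrr mulr0 subr0.
have cube_d : d ^+ 2 * (1 - d) = 0.
  rewrite (_ : _ * _ = (c * d * b + d * d - d) - d * (c * b + d * d - 1)); last by ring.
  by rewrite -br_d sq_d !subrr mulr0 subr0.
have [trace0 | trace_neq0] := eqVneq (a + d) 0.
- right.
  have d_opp : d = - a by apply/eqP; rewrite -addr_eq0 addrC trace0.
  have a0 : a = 0.
    have : 2%:R * a ^+ 2 = a ^+ 2 * (1 - a) + d ^+ 2 * (1 - d) by rewrite d_opp; ring.
    by rewrite cube_a cube_d addr0 => /eqP; rewrite mulf_eq0 (negbTE two_neq0) expf_eq0 /= => /eqP.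
  have bc1 : b * c = 1 by rewrite -sq_a a0 mul0r add0r.
  have b_neq0 : b != 0.
    by apply/eqP => b0; move: bc1; rewrite b0 mul0r => /eqP; rewrite eq_sym oner_eq0.
  by exists b => //; rewrite d_opp a0 oppr0 -[c](mulKf b_neq0) bc1 mulr1.
- left.
  have b0 : b = 0.
    apply/eqP; move: sq_b; rewrite mulrC -mulrDr => /eqP.
    by rewrite mulf_eq0 (negbTE trace_neq0) orbF.
  have c0 : c = 0.
    apply/eqP; move: sq_c; rewrite [d * c]mulrC -mulrDr => /eqP.
    by rewrite mulf_eq0 (negbTE trace_neq0) orbF.
  have one_of_sq1 (x : F) : x * x = 1 -> x ^+ 2 * (1 - x) = 0 -> x = 1.
    by move=> xx1; rewrite expr2 xx1 mul1r => /eqP; rewrite subr_eq0 eq_sym => /eqP.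
  have a1 : a = 1 by apply: one_of_sq1; rewrite // -sq_a b0 mul0r addr0.
  have d1 : d = 1 by apply: one_of_sq1; rewrite // -sq_d b0 mulr0 add0r.
  by rewrite a1 b0 c0 d1.
Qed.
End Involution.

Theorem theorem3p1 (n c : nat) (hn : (3 <= n)%N) (hc : (1 <= c)%N)
  (R : 'M[C]_2) (S : 'I_c -> 'M[C]_2) :
  homog_2local_rep n c R S -> nontrivial_rep n c R S ->
  exists (P : 'M[C]_n) (r2 : C) (s1 s2 s3 s4 : 'I_c -> C),
    [/\ P \in unitmx, r2 != 0,
        (forall t, s1 t * s4 t - s2 t * s3 t != 0),
        (forall i, (1 <= i <= n - 1)%N ->
           P *m loc2 n i R *m invmx P = loc2 n i (mx2 0 r2 r2^-1 0)) &
        (forall i t, (1 <= i <= n - 1)%N ->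
           P *m loc2 n i (S t) *m invmx P
           = loc2 n i (mx2 (s1 t) (s2 t) (s3 t) (s4 t)))].
Proof.
have [m ->] : exists m, n = (3 + m)%N by exists (n - 3)%N; lia.
case=> _ [S_unit [braidR [_ [sqR [_ [_ mixRS]]]]]] nontriv.
have R2 : R *m R = 1%:M.
  move: (sqR 1%N isT); rewrite loc2_block // mul_block_diag1 (scalar_mx_block 3 m).
  by move/block_diag1_inj/loc2_3_1_sqr1.
have R_braid :
    loc2 3 1 R *m loc2 3 2 R *m loc2 3 1 R = loc2 3 2 R *m loc2 3 1 R *m loc2 3 2 R.
  by move: (braidR 1%N isT isT); rewrite !loc2_block // !mul_block_diag1 => /block_diag1_inj.
have two_neq0 : (2%:R : C) != 0 by rewrite (pnatr_eq0 Rdefinitions.R[i]).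
have [R1 | [r r_neq0 ->]] := involutive_braid_mx2 two_neq0 R2 R_braid.
- case: nontriv; split=> [i /andP[i_gt0 _] | i t /andP[i_gt0 _]]; first by rewrite R1 loc2_1.
  suff -> : S t = 1%:M by rewrite loc2_1.
  apply: loc2_3_12_eq1; move: (mixRS 1%N t isT isT).
  by rewrite R1 !loc2_1 // !mul1mx !mulmx1 !loc2_block // => /block_diag1_inj.
- exists 1%:M, r, (fun t => S t 0 0), (fun t => S t 0 1), (fun t => S t 1 0), (fun t => S t 1 1).
  split=> [|//|t|i _|i t _]; rewrite ?unitmx1 ?invmx1 ?mul1mx ?mulmx1 -?mx2E //.
  by rewrite -det_mx2 -mx2E -unitfE -unitmxE.
Qed.
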